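(* Let $S>0$, $K\ge2$, let $N_1,\dots,N_K$ be positive integers, and for $q\in\{1,\dots,K-1\}$ let $t_q$ be the unique solution in $t>1$ of $$t^2\ln t-(t^2-1)+\frac{t\sum_{k=1}^{q}N_k+N_{q+1}}{S+\sum_{k=1}^{K}N_k}(t-1)=0.$$ Then $t_q<t_{root}$ for all $q=1,\dots,K-1$, where $t_{root}\approx 2.21846$ is the larger root of the equation $t^2\ln t-(t^2-1)=0$. *)

From Stdlib Require Import Reals Lra Lia.
Open Scope R_scope.

Fixpoint psum (N : nat -> nat) (q : nat) : R :=
  match q with
  | O => 0
  | Datatypes.S q' => psum N q' + INR (N q)
  end.

Definition groot (t : R) : R := t ^ 2 * ln t - (t ^ 2 - 1).

(** A positive perturbation term makes [groot t] negative at the solution [t > 1].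
    Since [groot] is continuous on [(0, +oo)] and positive from [e] on, the
    intermediate value theorem yields a root of [groot] strictly above [t], and
    that root is at most the largest root [r]. *)

From Stdlib Require Import Reals Ranalysis5 Lra Lia.
Open Scope R_scope.

Lemma psum_ge0 (N : nat -> nat) (q : nat) : 0 <= psum N q.
Proof.
  induction q as [|q IHq]; simpl; [lra|].
  pose proof (pos_INR (N (S q))); lra.
Qed.

Lemma continuity_pt_groot (x : R) : 0 < x -> continuity_pt groot x.
Proof.
  intros Hx; unfold groot.
  apply continuity_pt_minus.
  - apply continuity_pt_mult.
    + apply derivable_continuous_pt, derivable_pt_pow.
    + apply derivable_continuous_pt; exists (/ x); apply derivable_pt_lim_ln; exact Hx.
  - apply continuity_pt_minus.
    + apply derivable_continuous_pt, derivable_pt_pow.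
    + apply continuity_pt_const; intros a b; reflexivity.
Qed.

Lemma groot_gt0 (x : R) : exp 1 <= x -> 0 < groot x.
Proof.
  intros Hx; unfold groot.
  pose proof (exp_pos 1) as He.
  assert (Hln : 1 <= ln x).
  { rewrite <- (ln_exp 1).
    destruct Hx as [Hlt|<-]; [left; apply ln_increasing; lra | right; reflexivity]. }
  assert (0 < x ^ 2) by (apply pow_lt; lra).
  nra.
Qed.

Lemma groot_root_gt (t : R) : 0 < t -> groot t < 0 ->
  exists u, t < u /\ groot u = 0.
Proof.
  intros Ht Hg.
  pose proof exp_le_3.
  destruct (IVT_interv groot t (t + 3)) as [u [[Htu Hu3] Hu]].
  - intros a Ha; apply continuity_pt_groot; lra.
  - lra.
  - exact Hg.
  - apply groot_gt0; lra.
  - exists u; split; [|exact Hu].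
    destruct Htu as [Htu|<-]; [exact Htu | lra].
Qed.

Lemma groot_lt0_of_perturbed_root (t c : R) :
  1 < t -> 0 < c -> groot t + c * (t - 1) = 0 -> groot t < 0.
Proof. intros Ht Hc Heq; nra. Qed.

Theorem corollary1
  (s : R) (K : nat) (N : nat -> nat)
  (hs : 0 < s) (hK : (2 <= K)%nat)
  (hN : forall k : nat, (1 <= k <= K)%nat -> (0 < N k)%nat)
  (q : nat) (hq : (1 <= q <= K - 1)%nat)
  (t : R) (ht : 1 < t)
  (heq : t ^ 2 * ln t - (t ^ 2 - 1)
         + (t * psum N q + INR (N (q + 1)%nat)) / (s + psum N K) * (t - 1) = 0)
  (r : R) (hr0 : 0 < r) (hr : groot r = 0)
  (hrmax : forall u : R, 0 < u -> groot u = 0 -> u <= r) :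
  t < r.
Proof.
  assert (HNq : 0 < INR (N (q + 1)%nat)) by (apply lt_0_INR, hN; lia).
  pose proof (psum_ge0 N q); pose proof (psum_ge0 N K).
  assert (Hc : 0 < (t * psum N q + INR (N (q + 1)%nat)) / (s + psum N K)).
  { apply Rdiv_lt_0_compat; nra. }
  assert (Hg : groot t < 0) by exact (groot_lt0_of_perturbed_root _ _ ht Hc heq).
  destruct (groot_root_gt t ltac:(lra) Hg) as [u [Htu Hu]].
  pose proof (hrmax u ltac:(lra) Hu); lra.
Qed.
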